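(* Let $H$ be a separable infinite-dimensional Hilbert space, let $\{u_t\}_{t\in\mathbb{R}}$ be a one-parameter group of unitaries in $B(H)$, and let $\{\alpha_t\}_{t\in\mathbb{R}}$ be the group of automorphisms of $B(H)$ given by $\alpha_t(A)=u_tAu_t^*$. Then $\{u_t\}_{t\in\mathbb{R}}$ is UEC as a family of maps $H_1\to H_1$ if and only if $\{\alpha_t\}_{t\in\mathbb{R}}$ is UEC as a family of maps $B_1\to B_1$.
   Context: $H_1$ is the closed unit ball of $H$ and $B_1$ the closed unit ball of $B(H)$. $H_1$ carries the (weak) uniformity whose basic entourages are the sets $\{(x,y)\in H_1\times H_1: |\langle x-y,z_i\rangle|<\epsilon,\ i=1,\dots,N\}$ with $z_i\in H_1$, $N\in\mathbb{N}$, $\epsilon>0$; $B_1$ carries the (weak operator) uniformity whose basic entourages are the sets $\{(A,B)\in B_1\times B_1: |\langle (A-B)w_i,z_i\rangle|<\epsilon,\ i=1,\dots,N\}$ with $w_i,z_i\in H_1$, $N\in\mathbb{N}$, $\epsilon>0$ (for separable $H$ these are the uniformities of the metrizable weak, resp. weak operator, topologies on these compact balls). A family $\mathcal{F}$ of maps from a uniform space $X$ to itself is uniformly equicontinuous (UEC) if for every entourage $U$ there is an entourage $W$ such that $(x,y)\in W$ implies $(f(x),f(y))\in U$ for all $f\in\mathcal{F}$. *)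

From Stdlib Require Import Reals.
Open Scope R_scope.

Record Cplx := mkC { Re : R; Im : R }.

Definition C0 : Cplx := mkC 0 0.
Definition C1 : Cplx := mkC 1 0.
Definition Cadd (a b : Cplx) : Cplx := mkC (Re a + Re b) (Im a + Im b).
Definition Cmul (a b : Cplx) : Cplx :=
  mkC (Re a * Re b - Im a * Im b) (Re a * Im b + Im a * Re b).
Definition Cconj (a : Cplx) : Cplx := mkC (Re a) (- Im a).
Definition Cmod (a : Cplx) : R := sqrt (Re a * Re a + Im a * Im a).

(* ---------- Complex Hilbert spaces ----------
   Inner product: linear in the first argument, conjugate-linear in the second. *)
Record HilbertSpace := {
  hV :> Type;
  hadd : hV -> hV -> hV;
  hzero : hV;
  hopp : hV -> hV;
  hscal : Cplx -> hV -> hV;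
  hinner : hV -> hV -> Cplx;
  hadd_assoc : forall x y z, hadd x (hadd y z) = hadd (hadd x y) z;
  hadd_comm : forall x y, hadd x y = hadd y x;
  hadd_zero : forall x, hadd x hzero = x;
  hadd_opp : forall x, hadd x (hopp x) = hzero;
  hscal_one : forall x, hscal C1 x = x;
  hscal_assoc : forall a b x, hscal a (hscal b x) = hscal (Cmul a b) x;
  hscal_addv : forall a x y, hscal a (hadd x y) = hadd (hscal a x) (hscal a y);
  hscal_adds : forall a b x, hscal (Cadd a b) x = hadd (hscal a x) (hscal b x);
  hinner_addl : forall x y z, hinner (hadd x y) z = Cadd (hinner x z) (hinner y z);
  hinner_scall : forall a x y, hinner (hscal a x) y = Cmul a (hinner x y);
  hinner_conj : forall x y, hinner y x = Cconj (hinner x y);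
  hinner_pos : forall x, 0 <= Re (hinner x x);
  hinner_def : forall x, hinner x x = C0 -> x = hzero;
  hcomplete : forall s : nat -> hV,
    (forall eps, 0 < eps -> exists N, forall m n, (N <= m)%nat -> (N <= n)%nat ->
       sqrt (Re (hinner (hadd (s m) (hopp (s n))) (hadd (s m) (hopp (s n))))) < eps) ->
    exists l, forall eps, 0 < eps -> exists N, forall n, (N <= n)%nat ->
       sqrt (Re (hinner (hadd (s n) (hopp l)) (hadd (s n) (hopp l)))) < eps
}.

Section HS.
Variable H : HilbertSpace.

Definition hsub (x y : H) : H := hadd H x (hopp H y).
Definition hnorm (x : H) : R := sqrt (Re (hinner H x x)).

Fixpoint lincomb (n : nat) (c : nat -> Cplx) (f : nat -> H) : H :=
  match n with
  | O => hzero H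
  | S k => hadd H (lincomb k c f) (hscal H (c k) (f k))
  end.

Definition separable : Prop :=
  exists e : nat -> H, forall x eps, 0 < eps -> exists n, hnorm (hsub x (e n)) < eps.

Definition infinite_dimensional : Prop :=
  forall n : nat, exists f : nat -> H,
    forall c : nat -> Cplx, lincomb n c f = hzero H ->
      forall i, (i < n)%nat -> c i = C0.

Definition linear_op (T : H -> H) : Prop :=
  (forall x y, T (hadd H x y) = hadd H (T x) (T y)) /\
  (forall a x, T (hscal H a x) = hscal H a (T x)).

Definition bounded_op (T : H -> H) : Prop :=
  linear_op T /\ exists M, forall x, hnorm (T x) <= M * hnorm x.

Definition is_adjoint (T S : H -> H) : Prop :=
  forall x y, hinner H (T x) y = hinner H x (S y).

Definition unitary (U : H -> H) : Prop :=
  bounded_op U /\ exists S, is_adjoint U S /\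
    (forall x, S (U x) = x) /\ (forall x, U (S x) = x).

Definition one_param_unitary_group (u : R -> H -> H) : Prop :=
  (forall t, unitary (u t)) /\
  (forall x, u 0 x = x) /\
  (forall s t x, u (s + t) x = u s (u t x)) /\
  (forall x t0 eps, 0 < eps -> exists d, 0 < d /\
     forall t, Rabs (t - t0) < d -> hnorm (hsub (u t x) (u t0 x)) < eps).

Definition in_H1 (x : H) : Prop := hnorm x <= 1.
Definition in_B1 (A : H -> H) : Prop :=
  linear_op A /\ forall x, hnorm (A x) <= hnorm x.

Definition weak_ent (N : nat) (z : nat -> H) (eps : R) (x y : H) : Prop :=
  forall i, (i < N)%nat -> Cmod (hinner H (hsub x y) (z i)) < eps.

Definition wot_ent (N : nat) (w z : nat -> H) (eps : R) (A B : H -> H) : Prop :=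
  forall i, (i < N)%nat ->
    Cmod (hinner H (hsub (A (w i)) (B (w i))) (z i)) < eps.

Definition UEC_H1 (u : R -> H -> H) : Prop :=
  forall N (z : nat -> H) eps,
    (forall i, (i < N)%nat -> in_H1 (z i)) -> 0 < eps ->
    exists M (w : nat -> H) del,
      (forall i, (i < M)%nat -> in_H1 (w i)) /\ 0 < del /\
      forall x y, in_H1 x -> in_H1 y -> weak_ent M w del x y ->
        forall t, weak_ent N z eps (u t x) (u t y).

Definition UEC_B1 (alpha : R -> (H -> H) -> (H -> H)) : Prop :=
  forall N (w z : nat -> H) eps,
    (forall i, (i < N)%nat -> in_H1 (w i) /\ in_H1 (z i)) -> 0 < eps ->
    exists M (w' z' : nat -> H) del,
      (forall i, (i < M)%nat -> in_H1 (w' i) /\ in_H1 (z' i)) /\ 0 < del /\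
      forall A B, in_B1 A -> in_B1 B -> wot_ent M w' z' del A B ->
        forall t, wot_ent N w z eps (alpha t A) (alpha t B).

End HS.

(* Both families act, after moving u_t across the inner product, as families of
   adjoints u_t^* applied to finitely many test vectors.  Gram-Schmidt on the test
   vectors of a witnessing entourage gives a finite orthonormal family e; applying
   the hypothesis to the residual r of u_t^* z off span e (a vector of the unit
   ball orthogonal to the witnesses, or the rank-one operator x |-> <x,r> r) shows
   |r|^2 = <r, u_t^* z> is small uniformly in t.  The pairing against u_t^* z is
   then controlled by finitely many coordinates in e plus the uniformly small
   residual, which is exactly a basic entourage of the other uniformity. *)
From Pilot Require Import Defs.
From Stdlib Require Import Reals Lra Lia Psatz.
Open Scope R_scope.

Lemma lt_of_sqr_lt a b : 0 <= b -> a * a < b * b -> a < b.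
Proof. intros. destruct (Rlt_or_le a b); auto. nra. Qed.

Lemma Cplx_ext (a b : Cplx) : Re a = Re b -> Im a = Im b -> a = b.
Proof. destruct a, b; simpl; intros; subst; reflexivity. Qed.

Definition Copp (a : Cplx) : Cplx := mkC (- Re a) (- Im a).

Lemma Cmod_ge0 a : 0 <= Cmod a.
Proof. apply sqrt_pos. Qed.

Lemma Cmod_sqr a : Cmod a * Cmod a = Re a * Re a + Im a * Im a.
Proof. unfold Cmod. apply sqrt_sqrt. nra. Qed.

Lemma Cmod_C0 : Cmod C0 = 0.
Proof. unfold Cmod, C0; simpl. replace (0*0+0*0) with 0 by ring. apply sqrt_0. Qed.

Lemma Cmod_real r : 0 <= r -> Cmod (mkC r 0) = r.
Proof.
  intros. unfold Cmod; simpl. replace (r * r + 0 * 0) with (r * r) by ring.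
  apply sqrt_square; auto.
Qed.

Lemma Cmod_le_of_sqr a b : 0 <= b -> Re a * Re a + Im a * Im a <= b * b -> Cmod a <= b.
Proof.
  intros Hb Hab. destruct (Rle_or_lt (Cmod a) b); auto.
  pose proof (Cmod_sqr a). pose proof (Cmod_ge0 a). nra.
Qed.

Lemma Cmod_triangle a b : Cmod (Cadd a b) <= Cmod a + Cmod b.
Proof.
  pose proof (Cmod_ge0 a); pose proof (Cmod_ge0 b).
  pose proof (Cmod_sqr a) as Ea; pose proof (Cmod_sqr b) as Eb.
  apply Cmod_le_of_sqr; [lra|]. unfold Cadd; simpl.
  assert (Re a * Re b + Im a * Im b <= Cmod a * Cmod b).
  { destruct (Rle_or_lt (Re a * Re b + Im a * Im b) 0); [nra|].
    assert ((Re a * Re b + Im a * Im b) * (Re a * Re b + Im a * Im b)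
            <= (Cmod a * Cmod a) * (Cmod b * Cmod b)).
    { rewrite Ea, Eb. pose proof (Rle_0_sqr (Re a * Im b - Im a * Re b)).
      unfold Rsqr in *. nra. }
    destruct (Rle_or_lt (Re a * Re b + Im a * Im b) (Cmod a * Cmod b)); auto.
    assert (0 <= Cmod a * Cmod b) by nra. nra. }
  nra.
Qed.

Lemma Cmod_mul a b : Cmod (Cmul a b) = Cmod a * Cmod b.
Proof. unfold Cmod, Cmul; simpl. rewrite <- sqrt_mult by nra. f_equal. ring. Qed.

Lemma Cmod_conj a : Cmod (Cconj a) = Cmod a.
Proof. unfold Cmod, Cconj; simpl. f_equal. ring. Qed.

Lemma Cmod_opp a : Cmod (Copp a) = Cmod a.
Proof. unfold Cmod, Copp; simpl. f_equal. ring. Qed.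

Lemma Cmod_sub_le a b : Cmod (Cadd a (Copp b)) <= Cmod a + Cmod b.
Proof. rewrite <- (Cmod_opp b). apply Cmod_triangle. Qed.

Lemma Cconj_C0 : Cconj C0 = C0.
Proof. apply Cplx_ext; simpl; ring. Qed.

Fixpoint csum (n : nat) (f : nat -> Cplx) : Cplx :=
  match n with O => C0 | S k => Cadd (csum k f) (f k) end.

Lemma csum_zero n f : (forall k, (k < n)%nat -> f k = C0) -> csum n f = C0.
Proof.
  induction n; simpl; intros Hf; auto.
  rewrite IHn, Hf by (intros; try apply Hf; lia). apply Cplx_ext; simpl; ring.
Qed.

Lemma csum_single n f j : (j < n)%nat -> (forall k, (k < n)%nat -> k <> j -> f k = C0) ->
  csum n f = f j.
Proof.
  induction n; intros Hj Hf; [lia|]. simpl.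
  destruct (Nat.eq_dec j n) as [->|Hjn].
  - rewrite csum_zero by (intros; apply Hf; lia). apply Cplx_ext; simpl; ring.
  - rewrite IHn, (Hf n) by (try lia; intros; apply Hf; lia). apply Cplx_ext; simpl; ring.
Qed.

Lemma csum_ext n f g : (forall k, (k < n)%nat -> f k = g k) -> csum n f = csum n g.
Proof. induction n; simpl; intros E; auto. rewrite IHn, E by (intros; try apply E; lia). auto. Qed.

Lemma csum_sub n f g :
  Cadd (csum n f) (Copp (csum n g)) = csum n (fun k => Cadd (f k) (Copp (g k))).
Proof. induction n; simpl; [|rewrite <- IHn]; apply Cplx_ext; simpl; ring. Qed.

Lemma Cmod_csum_le n f d : (forall k, (k < n)%nat -> Cmod (f k) <= d) ->
  Cmod (csum n f) <= INR n * d.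
Proof.
  induction n; intros Hf; cbn [csum].
  - rewrite Cmod_C0; simpl; lra.
  - rewrite S_INR. pose proof (Cmod_triangle (csum n f) (f n)).
    assert (Cmod (f n) <= d) by (apply Hf; lia).
    assert (Cmod (csum n f) <= INR n * d) by (apply IHn; intros; apply Hf; lia). lra.
Qed.

Lemma Cmod_csum_coef_le n c f d :
  (forall k, (k < n)%nat -> Cmod (c k) <= 1) -> (forall k, (k < n)%nat -> Cmod (f k) <= d) ->
  Cmod (csum n (fun k => Cmul (c k) (f k))) <= INR n * d.
Proof.
  intros Hc Hf. apply Cmod_csum_le. intros k Hk. rewrite Cmod_mul.
  pose proof (Hc k Hk). pose proof (Hf k Hk). pose proof (Cmod_ge0 (c k)).
  pose proof (Cmod_ge0 (f k)). nra.
Qed.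

Lemma mul_div_scale_lt x eps c : 0 <= x -> 0 < eps -> 0 < c ->
  x * (eps / (c * (x + 1))) < eps / c.
Proof.
  intros. apply (Rmult_lt_reg_r (c * (x + 1))); [nra|].
  field_simplify; nra.
Qed.

Section InnerProduct.
Context {H : HilbertSpace}.
Implicit Types x y z : H.

Lemma hadd_0l x : hadd H (hzero H) x = x.
Proof. rewrite hadd_comm. apply hadd_zero. Qed.

Lemma hadd_cancel x y : hadd H x y = x -> y = hzero H.
Proof.
  intros E.
  transitivity (hadd H y (hadd H x (hopp H x))); [rewrite hadd_opp, hadd_zero; auto|].
  rewrite hadd_assoc, (hadd_comm H y x), E. apply hadd_opp.
Qed.

Lemma hsub_eq0 x y : hsub H x y = hzero H -> x = y.
Proof.
  unfold hsub; intros E.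
  transitivity (hadd H x (hadd H (hopp H y) y)).
  { rewrite (hadd_comm H (hopp H y)), hadd_opp, hadd_zero; auto. }
  rewrite hadd_assoc, E. apply hadd_0l.
Qed.

Lemma hadd_hsub x y : hadd H y (hsub H x y) = x.
Proof. unfold hsub. rewrite (hadd_comm H x), hadd_assoc, hadd_opp. apply hadd_0l. Qed.

Lemma hscal_0v a : hscal H a (hzero H) = hzero H.
Proof.
  apply (hadd_cancel (hscal H a (hzero H))). rewrite <- hscal_addv, hadd_zero. reflexivity.
Qed.

Lemma inner_0l y : hinner H (hzero H) y = C0.
Proof.
  pose proof (hinner_addl H (hzero H) (hzero H) y) as E. rewrite hadd_zero in E.
  destruct (hinner H (hzero H) y) as [a b]. injection E; intros. apply Cplx_ext; simpl; lra.
Qed.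

Lemma inner_oppl x y : hinner H (hopp H x) y = Copp (hinner H x y).
Proof.
  pose proof (hinner_addl H x (hopp H x) y) as E. rewrite hadd_opp, inner_0l in E.
  apply Cplx_ext; unfold Copp; simpl.
  - apply (f_equal Re) in E. simpl in E. lra.
  - apply (f_equal Im) in E. simpl in E. lra.
Qed.

Lemma inner_subl x y z : hinner H (hsub H x y) z = Cadd (hinner H x z) (Copp (hinner H y z)).
Proof. unfold hsub. rewrite hinner_addl, inner_oppl. reflexivity. Qed.

Lemma inner_addr x y z : hinner H x (hadd H y z) = Cadd (hinner H x y) (hinner H x z).
Proof.
  rewrite hinner_conj, hinner_addl, (hinner_conj H y x), (hinner_conj H z x).
  apply Cplx_ext; simpl; ring.
Qed.

Lemma inner_scalr a x y : hinner H x (hscal H a y) = Cmul (Cconj a) (hinner H x y).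
Proof. rewrite hinner_conj, hinner_scall, (hinner_conj H y x). apply Cplx_ext; simpl; ring. Qed.

Lemma inner_0r x : hinner H x (hzero H) = C0.
Proof. rewrite hinner_conj, inner_0l. apply Cconj_C0. Qed.

Lemma inner_subr x y z : hinner H x (hsub H y z) = Cadd (hinner H x y) (Copp (hinner H x z)).
Proof.
  rewrite hinner_conj, inner_subl, (hinner_conj H y x), (hinner_conj H z x).
  apply Cplx_ext; simpl; ring.
Qed.

Lemma inner_sub0 x y : hinner H (hsub H x (hzero H)) y = hinner H x y.
Proof. rewrite inner_subl, inner_0l. apply Cplx_ext; simpl; ring. Qed.

Lemma inner_sym0 x y : hinner H x y = C0 -> hinner H y x = C0.
Proof. intros E. rewrite hinner_conj, E. apply Cconj_C0. Qed.

Lemma inner_add_add x y z w :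
  hinner H (hadd H x y) (hadd H z w) =
  Cadd (Cadd (hinner H x z) (hinner H x w)) (Cadd (hinner H y z) (hinner H y w)).
Proof. rewrite !hinner_addl, !inner_addr. reflexivity. Qed.

Definition sqnorm x : R := Re (hinner H x x).

Lemma sqnorm_ge0 x : 0 <= sqnorm x.
Proof. apply hinner_pos. Qed.

Lemma inner_self x : hinner H x x = mkC (sqnorm x) 0.
Proof.
  pose proof (f_equal Im (hinner_conj H x x)) as E. simpl in E.
  apply Cplx_ext; simpl; [reflexivity|lra].
Qed.

Lemma sqnorm_eq0 x : sqnorm x = 0 -> x = hzero H.
Proof. intros E. apply hinner_def. rewrite inner_self, E. reflexivity. Qed.

Lemma hnorm_ge0 x : 0 <= hnorm H x.
Proof. apply sqrt_pos. Qed.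

Lemma hnorm_sqr x : hnorm H x * hnorm H x = sqnorm x.
Proof. apply sqrt_sqrt, sqnorm_ge0. Qed.

Lemma hnorm_le x y : sqnorm x <= sqnorm y -> hnorm H x <= hnorm H y.
Proof. apply sqrt_le_1_alt. Qed.

Lemma hnorm_zero : hnorm H (hzero H) = 0.
Proof. unfold hnorm. rewrite inner_0l. apply sqrt_0. Qed.

Lemma in_H1_zero : in_H1 H (hzero H).
Proof. unfold in_H1. rewrite hnorm_zero. lra. Qed.

Lemma Cmod_inner_self x : Cmod (hinner H x x) = hnorm H x * hnorm H x.
Proof. rewrite inner_self, hnorm_sqr. apply Cmod_real, sqnorm_ge0. Qed.

Lemma sqnorm_scal a x : sqnorm (hscal H a x) = (Re a * Re a + Im a * Im a) * sqnorm x.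
Proof. unfold sqnorm. rewrite hinner_scall, inner_scalr, inner_self. simpl. ring. Qed.

Lemma hnorm_scal a x : hnorm H (hscal H a x) = Cmod a * hnorm H x.
Proof.
  unfold hnorm. fold (sqnorm (hscal H a x)) (sqnorm x). rewrite sqnorm_scal.
  apply sqrt_mult; [nra|apply sqnorm_ge0].
Qed.

(* Expand [0 <= |b x - <x,y> y|^2] with [b = |y|^2]. *)
Lemma Cauchy_Schwarz x y : Cmod (hinner H x y) <= hnorm H x * hnorm H y.
Proof.
  destruct (Req_dec (sqnorm y) 0) as [E|Hb].
  { apply sqnorm_eq0 in E. subst. rewrite inner_0r, Cmod_C0, hnorm_zero. lra. }
  pose proof (sqnorm_ge0 y) as Hb0. pose proof (sqnorm_ge0 x).
  set (b := sqnorm y) in *. set (p := hinner H x y).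
  pose proof (sqnorm_ge0 (hadd H (hscal H (mkC b 0) x) (hscal H (Copp p) y))) as P.
  unfold sqnorm at 1 in P.
  rewrite inner_add_add, !hinner_scall, !inner_scalr, (hinner_conj H x y), !inner_self in P.
  fold p b in P. destruct p as [p1 p2]. unfold Copp, Cconj, Cadd, Cmul in P. simpl in P.
  assert (Q : p1 * p1 + p2 * p2 <= b * sqnorm x).
  { destruct (Rle_or_lt (p1 * p1 + p2 * p2) (b * sqnorm x)); auto. nra. }
  apply Cmod_le_of_sqr; [apply Rmult_le_pos; apply hnorm_ge0|]. simpl.
  replace (hnorm H x * hnorm H y * (hnorm H x * hnorm H y))
    with ((hnorm H x * hnorm H x) * (hnorm H y * hnorm H y)) by ring.
  rewrite !hnorm_sqr. fold b. nra.
Qed.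

Lemma Cmod_inner_sub_le x y r :
  Cmod (hinner H (hsub H x y) r) <= (hnorm H x + hnorm H y) * hnorm H r.
Proof.
  rewrite inner_subl. pose proof (Cmod_sub_le (hinner H x r) (hinner H y r)).
  pose proof (Cauchy_Schwarz x r). pose proof (Cauchy_Schwarz y r). nra.
Qed.

Lemma lincomb_ext n c c' (f f' : nat -> H) :
  (forall k, (k < n)%nat -> c k = c' k /\ f k = f' k) -> lincomb H n c f = lincomb H n c' f'.
Proof.
  induction n; simpl; intros E; auto.
  rewrite IHn by (intros; apply E; lia). destruct (E n) as [-> ->]; auto.
Qed.

Lemma inner_lincombl n c f y :
  hinner H (lincomb H n c f) y = csum n (fun k => Cmul (c k) (hinner H (f k) y)).
Proof.
  induction n; simpl; [apply inner_0l|]. rewrite hinner_addl, hinner_scall, IHn. reflexivity.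
Qed.

Lemma inner_lincombr n c f y :
  hinner H y (lincomb H n c f) = csum n (fun k => Cmul (Cconj (c k)) (hinner H y (f k))).
Proof.
  induction n; simpl; [apply inner_0r|]. rewrite inner_addr, inner_scalr, IHn. reflexivity.
Qed.

Lemma linear_zero (A : H -> H) : linear_op H A -> A (hzero H) = hzero H.
Proof.
  intros [Ha _]. apply (hadd_cancel (A (hzero H))). rewrite <- Ha, hadd_zero. auto.
Qed.

Lemma linear_lincomb (A : H -> H) n c f : linear_op H A ->
  A (lincomb H n c f) = lincomb H n c (fun k => A (f k)).
Proof.
  intros HA. induction n; simpl; [apply linear_zero; auto|].
  destruct HA as [Ha Hs]. rewrite Ha, Hs, IHn. auto.
Qed.

End InnerProduct.

Section GramSchmidt.
Context {H : HilbertSpace}.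
Implicit Types x y : H.

Definition normalize x : H :=
  if Req_EM_T (hnorm H x) 0 then hzero H else hscal H (mkC (/ hnorm H x) 0) x.

Lemma normalize_unit_or_zero x :
  normalize x = hzero H \/ hinner H (normalize x) (normalize x) = Defs.C1.
Proof.
  unfold normalize. destruct (Req_EM_T (hnorm H x) 0) as [E|E]; auto.
  right. rewrite inner_self, sqnorm_scal, <- hnorm_sqr. apply Cplx_ext; simpl; [field|]; auto.
Qed.

Lemma inner_normalizel x y : hinner H x y = C0 -> hinner H (normalize x) y = C0.
Proof.
  intros E. unfold normalize. destruct (Req_EM_T (hnorm H x) 0); [apply inner_0l|].
  rewrite hinner_scall, E. apply Cplx_ext; simpl; ring.
Qed.

Lemma scal_normalize x : hscal H (mkC (hnorm H x) 0) (normalize x) = x.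
Proof.
  unfold normalize. destruct (Req_EM_T (hnorm H x) 0) as [E|E].
  - rewrite hscal_0v. symmetry. apply sqnorm_eq0. rewrite <- hnorm_sqr, E. ring.
  - rewrite hscal_assoc. replace (Cmul _ _) with Defs.C1; [apply hscal_one|].
    apply Cplx_ext; simpl; field; auto.
Qed.

(* Zero vectors are allowed, so that Gram-Schmidt needs no independence assumption. *)
Definition orthonormal (e : nat -> H) n :=
  (forall j k, (j < k)%nat -> (k < n)%nat -> hinner H (e k) (e j) = C0) /\
  (forall k, (k < n)%nat -> e k = hzero H \/ hinner H (e k) (e k) = Defs.C1).

Lemma orthonormal_inner e n j k : orthonormal e n -> (j < n)%nat -> (k < n)%nat -> j <> k ->
  hinner H (e k) (e j) = C0.
Proof.
  intros [Ho _] Hj Hk D. destruct (Nat.lt_ge_cases j k); [apply Ho; auto|].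
  apply inner_sym0, Ho; auto. lia.
Qed.

Lemma orthonormal_hnorm_le1 e n k : orthonormal e n -> (k < n)%nat -> hnorm H (e k) <= 1.
Proof.
  intros [_ Hn] Hk. rewrite <- sqrt_1. apply sqrt_le_1_alt.
  destruct (Hn k Hk) as [E|E]; rewrite E; [rewrite inner_0l|]; simpl; lra.
Qed.

Lemma Cmod_coef_le e n a k : orthonormal e n -> (k < n)%nat -> hnorm H a <= 1 ->
  Cmod (hinner H a (e k)) <= 1.
Proof.
  intros He Hk Ha. pose proof (Cauchy_Schwarz a (e k)).
  pose proof (orthonormal_hnorm_le1 e n k He Hk). pose proof (hnorm_ge0 a).
  pose proof (hnorm_ge0 (e k)). nra.
Qed.

Definition proj (e : nat -> H) n a := lincomb H n (fun k => hinner H a (e k)) e.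
Definition residual (e : nat -> H) n a := hsub H a (proj e n a).

Lemma proj_add_residual e n a : hadd H (proj e n a) (residual e n a) = a.
Proof. apply hadd_hsub. Qed.

Lemma inner_residual_basis e n a j : orthonormal e n -> (j < n)%nat ->
  hinner H (residual e n a) (e j) = C0.
Proof.
  intros He Hj. unfold residual, proj. rewrite inner_subl, inner_lincombl.
  rewrite (csum_single n _ j Hj).
  2:{ intros k Hk D. rewrite (orthonormal_inner e n j k); auto. apply Cplx_ext; simpl; ring. }
  destruct (proj2 He j Hj) as [E|E]; rewrite E; [rewrite inner_0r|];
    apply Cplx_ext; simpl; ring.
Qed.

Lemma inner_proj_orth e n r a : (forall k, (k < n)%nat -> hinner H r (e k) = C0) ->
  hinner H r (proj e n a) = C0.
Proof.
  intros Hr. unfold proj. rewrite inner_lincombr. apply csum_zero. intros k Hk.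
  rewrite Hr by auto. apply Cplx_ext; simpl; ring.
Qed.

Lemma inner_residual_proj e n a : orthonormal e n ->
  hinner H (residual e n a) (proj e n a) = C0.
Proof. intros He. apply inner_proj_orth. intros; apply inner_residual_basis; auto. Qed.

Lemma sqnorm_proj_residual e n a : orthonormal e n ->
  sqnorm a = sqnorm (proj e n a) + sqnorm (residual e n a).
Proof.
  intros He. pose proof (inner_residual_proj e n a He) as O.
  pose proof (proj_add_residual e n a) as E.
  set (p := proj e n a) in *; set (r := residual e n a) in *.
  unfold sqnorm. rewrite <- E, inner_add_add, O, (inner_sym0 _ _ O). simpl. ring.
Qed.

Lemma hnorm_proj_le e n a : orthonormal e n -> hnorm H (proj e n a) <= hnorm H a.
Proof.
  intros He. apply hnorm_le. rewrite (sqnorm_proj_residual e n a He).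
  pose proof (sqnorm_ge0 (residual e n a)). lra.
Qed.

Lemma hnorm_residual_le e n a : orthonormal e n -> hnorm H (residual e n a) <= hnorm H a.
Proof.
  intros He. apply hnorm_le. rewrite (sqnorm_proj_residual e n a He).
  pose proof (sqnorm_ge0 (proj e n a)). lra.
Qed.

Lemma inner_residual_self e n a : orthonormal e n ->
  hinner H (residual e n a) a = hinner H (residual e n a) (residual e n a).
Proof.
  intros He. pose proof (inner_residual_proj e n a He) as O.
  pose proof (proj_add_residual e n a) as E.
  set (p := proj e n a) in *; set (r := residual e n a) in *.
  rewrite <- E at 1. rewrite inner_addr, O. apply Cplx_ext; simpl; ring.
Qed.

Fixpoint gram_schmidt_upto (v : nat -> H) (n : nat) : nat -> H :=
  match n with
  | O => fun _ => hzero H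
  | S m => fun k => if Nat.ltb k m then gram_schmidt_upto v m k
           else normalize (residual (gram_schmidt_upto v m) m (v m))
  end.

Definition gram_schmidt v k := gram_schmidt_upto v (S k) k.

Lemma gram_schmidt_upto_stable v n k : (k < n)%nat -> gram_schmidt_upto v n k = gram_schmidt v k.
Proof.
  induction n; intros Hk; [lia|]. simpl. destruct (Nat.ltb_spec k n); [apply IHn; auto|].
  replace k with n by lia. unfold gram_schmidt. simpl. rewrite Nat.ltb_irrefl. auto.
Qed.

Lemma gram_schmidt_rec v m :
  gram_schmidt v m = normalize (residual (gram_schmidt v) m (v m)).
Proof.
  unfold gram_schmidt at 1. simpl. rewrite Nat.ltb_irrefl. unfold residual, proj.
  do 2 f_equal. apply lincomb_ext. intros. rewrite gram_schmidt_upto_stable; auto.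
Qed.

Lemma gram_schmidt_orthonormal v n : orthonormal (gram_schmidt v) n.
Proof.
  induction n as [|n [Ho Hn]]; [split; intros; lia|]. split.
  - intros j k Hjk Hk. destruct (Nat.eq_dec k n) as [->|]; [|apply Ho; lia].
    rewrite gram_schmidt_rec. apply inner_normalizel, inner_residual_basis; auto. split; auto.
  - intros k Hk. destruct (Nat.eq_dec k n) as [->|]; [|apply Hn; lia].
    rewrite gram_schmidt_rec. apply normalize_unit_or_zero.
Qed.

(* [v m] is a combination of [gram_schmidt v k], [k <= m]. *)
Lemma inner_gram_schmidt_orth v n r :
  (forall k, (k < n)%nat -> hinner H r (gram_schmidt v k) = C0) ->
  forall m, (m < n)%nat -> hinner H r (v m) = C0.
Proof.
  intros Hr m Hm. set (rho := residual (gram_schmidt v) m (v m)).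
  rewrite <- (proj_add_residual (gram_schmidt v) m (v m)), inner_addr.
  rewrite inner_proj_orth by (intros; apply Hr; lia). fold rho.
  rewrite <- (scal_normalize rho), inner_scalr. unfold rho. rewrite <- gram_schmidt_rec, Hr by auto.
  apply Cplx_ext; simpl; ring.
Qed.

End GramSchmidt.

Section Estimates.
Context {H : HilbertSpace}.
Implicit Types x y a b : H.

Lemma Cmod_inner_proj_le e n x a d : orthonormal e n -> hnorm H a <= 1 ->
  (forall k, (k < n)%nat -> Cmod (hinner H x (e k)) <= d) ->
  Cmod (hinner H x (proj e n a)) <= INR n * d.
Proof.
  intros He Ha Hd. unfold proj. rewrite inner_lincombr.
  apply Cmod_csum_coef_le; auto. intros k Hk. rewrite Cmod_conj.
  apply (Cmod_coef_le e n); auto.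
Qed.

Lemma Cmod_inner_sub_proj_le e n (A B : H -> H) a y d :
  orthonormal e n -> linear_op H A -> linear_op H B -> hnorm H a <= 1 ->
  (forall j, (j < n)%nat -> Cmod (hinner H (hsub H (A (e j)) (B (e j))) y) <= d) ->
  Cmod (hinner H (hsub H (A (proj e n a)) (B (proj e n a))) y) <= INR n * d.
Proof.
  intros He HA HB Ha Hd. unfold proj.
  rewrite (linear_lincomb A), (linear_lincomb B), inner_subl, !inner_lincombl by auto.
  replace (Cadd _ _) with (csum n (fun j => Cmul (hinner H a (e j))
                                  (hinner H (hsub H (A (e j)) (B (e j))) y))).
  2:{ rewrite csum_sub. apply csum_ext. intros j _.
      rewrite inner_subl. apply Cplx_ext; simpl; ring. }
  apply Cmod_csum_coef_le; auto. intros j Hj. apply (Cmod_coef_le e n); auto.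
Qed.

Lemma Cmod_inner_sub_le_residual e n x y a d :
  orthonormal e n -> hnorm H x <= 1 -> hnorm H y <= 1 -> hnorm H a <= 1 ->
  (forall k, (k < n)%nat -> Cmod (hinner H (hsub H x y) (e k)) <= d) ->
  Cmod (hinner H (hsub H x y) a) <= INR n * d + 2 * hnorm H (residual e n a).
Proof.
  intros He Hx Hy Ha Hd.
  pose proof (Cmod_inner_proj_le e n (hsub H x y) a d He Ha Hd).
  pose proof (Cmod_inner_sub_le x y (residual e n a)).
  pose proof (proj_add_residual e n a) as E.
  set (p := proj e n a) in *; set (r := residual e n a) in *.
  rewrite <- E, inner_addr. pose proof (Cmod_triangle (hinner H (hsub H x y) p)
                                                    (hinner H (hsub H x y) r)).
  pose proof (hnorm_ge0 r). nra.
Qed.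

Lemma Cmod_inner_op_sub_le_residual e n (A B : H -> H) a b d :
  orthonormal e n -> in_B1 H A -> in_B1 H B -> hnorm H a <= 1 -> hnorm H b <= 1 ->
  (forall j k, (j < n)%nat -> (k < n)%nat ->
     Cmod (hinner H (hsub H (A (e j)) (B (e j))) (e k)) <= d) ->
  Cmod (hinner H (hsub H (A a) (B a)) b)
    <= INR n * (INR n * d) + 2 * hnorm H (residual e n a) + 2 * hnorm H (residual e n b).
Proof.
  intros He [HA NA] [HB NB] Ha Hb Hd.
  pose proof (hnorm_proj_le e n a He). pose proof (hnorm_residual_le e n a He).
  pose proof (proj_add_residual e n a) as E.
  set (p := proj e n a) in *; set (r := residual e n a) in *.
  assert (Split : hinner H (hsub H (A a) (B a)) b =
    Cadd (hinner H (hsub H (A p) (B p)) b) (hinner H (hsub H (A r) (B r)) b)).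
  { rewrite <- E, (proj1 HA), (proj1 HB), !inner_subl, !hinner_addl.
    apply Cplx_ext; simpl; ring. }
  assert (Tp : Cmod (hinner H (hsub H (A p) (B p)) b)
               <= INR n * (INR n * d) + 2 * hnorm H (residual e n b)).
  { pose proof (NA p). pose proof (NB p).
    apply Cmod_inner_sub_le_residual; auto; try lra.
    intros k Hk. apply Cmod_inner_sub_proj_le; auto. }
  assert (Tr : Cmod (hinner H (hsub H (A r) (B r)) b) <= 2 * hnorm H r).
  { pose proof (Cmod_inner_sub_le (A r) (B r) b). pose proof (NA r). pose proof (NB r).
    pose proof (hnorm_ge0 b). pose proof (hnorm_ge0 r). nra. }
  rewrite Split. pose proof (Cmod_triangle (hinner H (hsub H (A p) (B p)) b)
                                           (hinner H (hsub H (A r) (B r)) b)).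
  lra.
Qed.

(* Test with the residual [r] itself: it is orthogonal to [v] and [<r, a> = |r|^2]. *)
Lemma hnorm_residual_lt v n a q : hnorm H a <= 1 -> 0 < q ->
  (forall r, hnorm H r <= 1 -> (forall m, (m < n)%nat -> hinner H r (v m) = C0) ->
     Cmod (hinner H r a) < q * q) ->
  hnorm H (residual (gram_schmidt v) n a) < q.
Proof.
  intros Ha Hq Htest. pose proof (gram_schmidt_orthonormal v n) as He.
  apply lt_of_sqr_lt; [lra|]. rewrite <- Cmod_inner_self, <- inner_residual_self by auto.
  apply Htest.
  - pose proof (hnorm_residual_le _ n a He). lra.
  - apply inner_gram_schmidt_orth. intros; apply inner_residual_basis; auto.
Qed.

End Estimates.

Section Entourages.
Context {H : HilbertSpace}.
Implicit Types x y r : H.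

Lemma hnorm_adjoint_unitary (U S : H -> H) : unitary H U -> is_adjoint H U S ->
  forall y, hnorm H (S y) = hnorm H y.
Proof.
  intros [_ [S' [HS' [_ HUS']]]] HS y.
  assert (ES : S y = S' y).
  { apply hsub_eq0, sqnorm_eq0. unfold sqnorm. rewrite inner_subr, <- HS, <- HS'.
    simpl. ring. }
  unfold hnorm. rewrite <- HS, ES, HUS'. reflexivity.
Qed.

Lemma inner_sub_adjoint (U S : H -> H) p q z : is_adjoint H U S ->
  hinner H (hsub H (U p) (U q)) z = hinner H (hsub H p q) (S z).
Proof. intros HS. rewrite !inner_subl, !HS. reflexivity. Qed.

Definition concat_seq n (f g : nat -> H) i := if Nat.ltb i n then f i else g (i - n)%nat.

Lemma concat_seq_l n f g i : (i < n)%nat -> concat_seq n f g i = f i.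
Proof. intros Hi. unfold concat_seq. destruct (Nat.ltb_spec i n); [auto|lia]. Qed.

Lemma concat_seq_r n f g i : concat_seq n f g (n + i) = g i.
Proof.
  unfold concat_seq. destruct (Nat.ltb_spec (n + i) n); [lia|]. f_equal. lia.
Qed.

Lemma weak_ent_zero_of_orth n (v : nat -> H) d r : 0 < d ->
  (forall m, (m < n)%nat -> hinner H r (v m) = C0) -> weak_ent H n v d r (hzero H).
Proof. intros Hd Ho m Hm. rewrite inner_sub0, Ho, Cmod_C0 by auto. exact Hd. Qed.

Definition rank_one r x : H := hscal H (hinner H x r) r.

Lemma in_B1_rank_one r : hnorm H r <= 1 -> in_B1 H (rank_one r).
Proof.
  intros Hr. split; [split|].
  - intros x y. unfold rank_one. rewrite hinner_addl. apply hscal_adds.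
  - intros c x. unfold rank_one. rewrite hinner_scall. symmetry; apply hscal_assoc.
  - intros x. unfold rank_one. rewrite hnorm_scal. pose proof (Cauchy_Schwarz x r).
    pose proof (hnorm_ge0 r). pose proof (hnorm_ge0 x). pose proof (Cmod_ge0 (hinner H x r)).
    nra.
Qed.

Lemma in_B1_zero : in_B1 H (fun _ => hzero H).
Proof.
  split; [split|].
  - intros; symmetry; apply hadd_zero.
  - intros; symmetry; apply hscal_0v.
  - intros. rewrite hnorm_zero. apply hnorm_ge0.
Qed.

Lemma Cmod_inner_rank_one r a :
  Cmod (hinner H (rank_one r a) a) = Cmod (hinner H r a) * Cmod (hinner H r a).
Proof. unfold rank_one. rewrite hinner_scall, Cmod_mul, (hinner_conj H r a), Cmod_conj. ring. Qed.

Lemma wot_ent_rank_one_of_orth n (w z : nat -> H) d r : 0 < d ->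
  (forall j, (j < n)%nat -> hinner H r (z j) = C0) ->
  wot_ent H n w z d (rank_one r) (fun _ => hzero H).
Proof.
  intros Hd Ho j Hj. unfold rank_one. rewrite inner_sub0, hinner_scall, Ho by auto.
  replace (Cmul _ C0) with C0 by (apply Cplx_ext; simpl; ring). rewrite Cmod_C0. exact Hd.
Qed.

(* Index [j * n + k] of the witnesses encodes the matrix entry [(j, k)]. *)
Lemma wot_ent_matrix_entries n (e : nat -> H) d (A B : H -> H) :
  wot_ent H (n * n) (fun i => e (i / n)%nat) (fun i => e (i mod n)%nat) d A B ->
  forall j k, (j < n)%nat -> (k < n)%nat ->
    Cmod (hinner H (hsub H (A (e j)) (B (e j))) (e k)) < d.
Proof.
  intros Hent j k Hj Hk. specialize (Hent (j * n + k)%nat). cbv beta in Hent.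
  rewrite <- (Nat.div_unique (j * n + k) n j k), <- (Nat.mod_unique (j * n + k) n j k)
    in Hent by lia.
  apply Hent. nia.
Qed.

End Entourages.

Section Equicontinuity.
Variables (H : HilbertSpace) (u ustar : R -> H -> H).
Hypothesis u_unitary : forall t, unitary H (u t).
Hypothesis ustar_adjoint : forall t, is_adjoint H (u t) (ustar t).

Let alpha t (A : H -> H) (x : H) := u t (A (ustar t x)).

Lemma in_H1_ustar t y : in_H1 H y -> in_H1 H (ustar t y).
Proof. unfold in_H1. rewrite (hnorm_adjoint_unitary _ _ (u_unitary t) (ustar_adjoint t)). auto. Qed.

Lemma UEC_B1_of_UEC_H1 : UEC_H1 H u -> UEC_B1 H alpha.
Proof.
  intros Hu N w z eps Hwz Heps. set (q := eps / 8).
  assert (Hg : forall i, (i < N + N)%nat -> in_H1 H (concat_seq N z w i)).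
  { intros i Hi. unfold concat_seq. destruct (Nat.ltb_spec i N); apply Hwz; lia. }
  destruct (Hu (N + N)%nat (concat_seq N z w) (q * q) Hg)
    as [M [v [del1 [_ [Hdel1 Hent]]]]]; [unfold q; nra|].
  set (e := gram_schmidt v). pose proof (gram_schmidt_orthonormal v M) as He.
  assert (Htail : forall t i, (i < N + N)%nat ->
            hnorm H (residual e M (ustar t (concat_seq N z w i))) < q).
  { intros t i Hi. apply hnorm_residual_lt; [apply in_H1_ustar, Hg; auto|unfold q; lra|].
    intros r Hr Ho.
    pose proof (Hent r (hzero H) Hr in_H1_zero (weak_ent_zero_of_orth M v del1 r Hdel1 Ho)
                  t i Hi) as Hri.
    rewrite (inner_sub_adjoint _ _ _ _ _ (ustar_adjoint t)), inner_sub0 in Hri. exact Hri. }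
  pose proof (mul_div_scale_lt (INR M * INR M) eps 4) as Hdel.
  assert (HM : 0 <= INR M * INR M) by (pose proof (pos_INR M); nra).
  exists (M * M)%nat, (fun i => e (i / M)%nat), (fun i => e (i mod M)%nat),
    (eps / (4 * (INR M * INR M + 1))).
  split; [|split].
  - intros i Hi. assert (M <> 0%nat) by (intro; subst; simpl in Hi; lia).
    split; apply (orthonormal_hnorm_le1 e M); auto.
    + apply Nat.Div0.div_lt_upper_bound; lia.
    + apply Nat.mod_upper_bound; auto.
  - apply Rdiv_lt_0_compat; lra.
  - intros A B HA HB Hent' t i Hi. unfold alpha.
    rewrite (inner_sub_adjoint _ _ _ _ _ (ustar_adjoint t)).
    pose proof (Htail t (N + i)%nat ltac:(lia)) as Ta. rewrite concat_seq_r in Ta.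
    pose proof (Htail t i ltac:(lia)) as Tb. rewrite concat_seq_l in Tb by lia.
    eapply Rle_lt_trans.
    { apply (Cmod_inner_op_sub_le_residual e M A B); auto; try apply in_H1_ustar, Hwz, Hi.
      intros j k Hj Hk. apply Rlt_le, (wot_ent_matrix_entries M e _ A B Hent'); auto. }
    rewrite <- Rmult_assoc. specialize (Hdel HM Heps ltac:(lra)). unfold q in *. lra.
Qed.

Lemma UEC_H1_of_UEC_B1 : UEC_B1 H alpha -> UEC_H1 H u.
Proof.
  intros HB N z eps Hz Heps. set (q := eps / 4).
  assert (Hq2 : 0 < q * q) by (unfold q; nra).
  assert (Hzz : forall i, (i < N)%nat -> in_H1 H (z i) /\ in_H1 H (z i)) by auto.
  destruct (HB N z z ((q * q) * (q * q)) Hzz)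
    as [M [w' [z' [del1 [_ [Hdel1 Hent]]]]]]; [apply Rmult_lt_0_compat; auto|].
  set (e := gram_schmidt z'). pose proof (gram_schmidt_orthonormal z' M) as He.
  assert (Htail : forall t i, (i < N)%nat -> hnorm H (residual e M (ustar t (z i))) < q).
  { intros t i Hi. apply hnorm_residual_lt; [apply in_H1_ustar, Hz; auto|unfold q; lra|].
    intros r Hr Ho.
    pose proof (Hent (rank_one r) (fun _ => hzero H) (in_B1_rank_one r Hr) in_B1_zero
                  (wot_ent_rank_one_of_orth M w' z' del1 r Hdel1 Ho) t i Hi) as Hri.
    unfold alpha in Hri.
    rewrite (inner_sub_adjoint _ _ _ _ _ (ustar_adjoint t)), inner_sub0,
      Cmod_inner_rank_one in Hri.
    apply lt_of_sqr_lt; [unfold q; nra|exact Hri]. }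
  pose proof (mul_div_scale_lt (INR M) eps 2 (pos_INR M) Heps ltac:(lra)) as Hdel.
  exists M, e, (eps / (2 * (INR M + 1))). split; [|split].
  - intros k Hk. apply (orthonormal_hnorm_le1 e M); auto.
  - pose proof (pos_INR M). apply Rdiv_lt_0_compat; lra.
  - intros x y Hx Hy Hent' t i Hi.
    rewrite (inner_sub_adjoint _ _ _ _ _ (ustar_adjoint t)).
    eapply Rle_lt_trans.
    { apply (Cmod_inner_sub_le_residual e M x y); auto; [apply in_H1_ustar, Hz; auto|].
      intros k Hk. apply Rlt_le, Hent'; auto. }
    pose proof (Htail t i Hi). unfold q in *. lra.
Qed.

End Equicontinuity.

Theorem mainTheorem3 (H : HilbertSpace) :
  separable H -> infinite_dimensional H ->
  forall (u ustar : R -> H -> H),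
    one_param_unitary_group H u ->
    (forall t, is_adjoint H (u t) (ustar t)) ->
    (UEC_H1 H u <->
     UEC_B1 H (fun t (A : H -> H) (x : H) => u t (A (ustar t x)))).
Proof.
  intros _ _ u ustar [Hun _] Hadj. split.
  - apply UEC_B1_of_UEC_H1; auto.
  - apply UEC_H1_of_UEC_B1; auto.
Qed.
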